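(* For all real numbers $a,b,c>0$, \[ \frac{\sqrt{6}\,(a+b+c)^2}{6\sqrt{a^4+b^4+c^4+a^2b^2+b^2c^2+c^2a^2}}\leq \frac{a}{\sqrt{2a^2+b^2+c^2}}+\frac{b}{\sqrt{2b^2+c^2+a^2}}+\frac{c}{\sqrt{2c^2+a^2+b^2}}. \] *)

From Stdlib Require Import Reals.

(** The map w |-> 1/sqrt w is convex, so it lies above its tangent at any s^2:
    1/sqrt w >= (3 s^2 - w)/(2 s^3).  Weighting the three tangent bounds by
    a, b, c and taking s^2 = T/p, the weighted mean of the radicands
    (p = a+b+c, T = a(2a^2+b^2+c^2) + b(2b^2+c^2+a^2) + c(2c^2+a^2+b^2)),
    the right-hand side is at least p/s.  With Q the quartic on the left,
    p/s >= sqrt 6 p^2/(6 sqrt Q) reduces to the polynomial inequality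
    p T <= 6 Q, which is a sum of nonnegative terms for positive a, b, c. *)

From Stdlib Require Import Reals Lra Psatz.
Open Scope R_scope.

Lemma inv_sqrt_ge_tangent (s w : R) :
  0 < s -> 0 < w -> (3 * s ^ 2 - w) / (2 * s ^ 3) <= / sqrt w.
Proof.
  intros hs hw.
  pose proof (sqrt_lt_R0 w hw) as hu.
  pose proof (pow2_sqrt w (Rlt_le _ _ hw)) as hu2.
  set (u := sqrt w) in *.
  rewrite <- hu2.
  enough (0 <= / u - (3 * s ^ 2 - u ^ 2) / (2 * s ^ 3)) by lra.
  replace (/ u - (3 * s ^ 2 - u ^ 2) / (2 * s ^ 3))
    with ((s - u) ^ 2 * (2 * s + u) / (2 * s ^ 3 * u)) by (field; lra).
  apply Rle_mult_inv_pos.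
  - apply Rmult_le_pos; [apply pow2_ge_0 | lra].
  - apply Rmult_lt_0_compat; [apply Rmult_lt_0_compat; [lra | apply pow_lt] |]; lra.
Qed.

Lemma weighted_inv_sqrt_sum_ge (x1 x2 x3 w1 w2 w3 : R) :
  0 < x1 -> 0 < x2 -> 0 < x3 -> 0 < w1 -> 0 < w2 -> 0 < w3 ->
  let p := x1 + x2 + x3 in
  let T := x1 * w1 + x2 * w2 + x3 * w3 in
  p / sqrt (T / p) <= x1 / sqrt w1 + x2 / sqrt w2 + x3 / sqrt w3.
Proof.
  intros hx1 hx2 hx3 hw1 hw2 hw3 p T.
  assert (hp : 0 < p) by (unfold p; lra).
  assert (hT : 0 < T) by (unfold T; nra).
  assert (hTp : 0 < T / p) by (apply Rdiv_lt_0_compat; lra).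
  pose proof (sqrt_lt_R0 _ hTp) as hs.
  pose proof (pow2_sqrt _ (Rlt_le _ _ hTp)) as hs2.
  set (s := sqrt (T / p)) in *.
  assert (tangent_sum :
    x1 * ((3 * s ^ 2 - w1) / (2 * s ^ 3)) + x2 * ((3 * s ^ 2 - w2) / (2 * s ^ 3))
      + x3 * ((3 * s ^ 2 - w3) / (2 * s ^ 3)) = p / s).
  { transitivity ((3 * s ^ 2 * p - T) / (2 * s ^ 3)); [unfold T, p; field; lra |].
    replace (s ^ 3) with (s * s ^ 2) by ring.
    rewrite hs2; field; lra. }
  rewrite <- tangent_sum; unfold Rdiv at 4 5 6.
  pose proof (inv_sqrt_ge_tangent s w1 hs hw1).
  pose proof (inv_sqrt_ge_tangent s w2 hs hw2).
  pose proof (inv_sqrt_ge_tangent s w3 hs hw3).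
  apply Rplus_le_compat; [apply Rplus_le_compat |];
    apply Rmult_le_compat_l; lra.
Qed.

Lemma weighted_radicand_sum_le (a b c : R) :
  0 < a -> 0 < b -> 0 < c ->
  (a + b + c) * (a * (2 * a ^ 2 + b ^ 2 + c ^ 2) + b * (2 * b ^ 2 + c ^ 2 + a ^ 2)
                 + c * (2 * c ^ 2 + a ^ 2 + b ^ 2))
  <= 6 * (a ^ 4 + b ^ 4 + c ^ 4 + a ^ 2 * b ^ 2 + b ^ 2 * c ^ 2 + c ^ 2 * a ^ 2).
Proof.
  intros ha hb hc.
  assert (0 <= (a - b) ^ 2 * (a ^ 2 - a * b + b ^ 2))
    by (apply Rmult_le_pos; [apply pow2_ge_0 | nra]).
  assert (0 <= (b - c) ^ 2 * (b ^ 2 - b * c + c ^ 2))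
    by (apply Rmult_le_pos; [apply pow2_ge_0 | nra]).
  assert (0 <= (c - a) ^ 2 * (c ^ 2 - c * a + a ^ 2))
    by (apply Rmult_le_pos; [apply pow2_ge_0 | nra]).
  pose proof (pow2_ge_0 (a * b - b * c)). pose proof (pow2_ge_0 (b * c - c * a)).
  pose proof (pow2_ge_0 (c * a - a * b)). pose proof (pow2_ge_0 (a ^ 2 - b ^ 2)).
  pose proof (pow2_ge_0 (b ^ 2 - c ^ 2)). pose proof (pow2_ge_0 (c ^ 2 - a ^ 2)).
  lra.
Qed.

Lemma sqrt6_ratio_le (p T Q : R) :
  0 < p -> 0 < T -> 0 < Q -> p * T <= 6 * Q ->
  sqrt 6 * p ^ 2 / (6 * sqrt Q) <= p / sqrt (T / p).
Proof.
  intros hp hT hQ hpTQ.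
  assert (hTp : 0 < T / p) by (apply Rdiv_lt_0_compat; lra).
  pose proof (sqrt_lt_R0 _ hTp) as hs.
  pose proof (pow2_sqrt _ (Rlt_le _ _ hTp)) as hs2.
  pose proof (sqrt_lt_R0 _ hQ) as hU.
  pose proof (pow2_sqrt _ (Rlt_le _ _ hQ)) as hU2.
  pose proof (pow2_sqrt 6 ltac:(lra)) as hr2.
  set (s := sqrt (T / p)) in *; set (U := sqrt Q) in *; set (r := sqrt 6) in *.
  assert (hrps : r * p * s <= 6 * U).
  { apply Rsqr_incr_0_var; [unfold Rsqr | lra].
    replace (r * p * s * (r * p * s)) with (r ^ 2 * p * (p * s ^ 2)) by ring.
    replace (6 * U * (6 * U)) with (36 * U ^ 2) by ring.
    rewrite hr2, hs2, hU2.
    replace (6 * p * (p * (T / p))) with (6 * (p * T)) by (field; lra).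
    lra. }
  apply (Rmult_le_reg_r (6 * U * s)); [apply Rmult_lt_0_compat; lra |].
  replace (r * p ^ 2 / (6 * U) * (6 * U * s)) with (p * (r * p * s)) by (field; lra).
  replace (p / s * (6 * U * s)) with (p * (6 * U)) by (field; lra).
  apply Rmult_le_compat_l; lra.
Qed.

Theorem mainTheorem5 (a b c : R) (ha : 0 < a) (hb : 0 < b) (hc : 0 < c) :
  sqrt 6 * (a + b + c) ^ 2 /
    (6 * sqrt (a ^ 4 + b ^ 4 + c ^ 4 + a ^ 2 * b ^ 2 + b ^ 2 * c ^ 2 + c ^ 2 * a ^ 2))
  <= a / sqrt (2 * a ^ 2 + b ^ 2 + c ^ 2)
   + b / sqrt (2 * b ^ 2 + c ^ 2 + a ^ 2)
   + c / sqrt (2 * c ^ 2 + a ^ 2 + b ^ 2).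
Proof.
  assert (hw1 : 0 < 2 * a ^ 2 + b ^ 2 + c ^ 2) by nra.
  assert (hw2 : 0 < 2 * b ^ 2 + c ^ 2 + a ^ 2) by nra.
  assert (hw3 : 0 < 2 * c ^ 2 + a ^ 2 + b ^ 2) by nra.
  assert (hQ : 0 < a ^ 4 + b ^ 4 + c ^ 4 + a ^ 2 * b ^ 2 + b ^ 2 * c ^ 2 + c ^ 2 * a ^ 2).
  { pose proof (pow_lt a 4 ha). pose proof (pow2_ge_0 (b ^ 2)).
    pose proof (pow2_ge_0 (c ^ 2)). pose proof (pow2_ge_0 (a * b)).
    pose proof (pow2_ge_0 (b * c)). pose proof (pow2_ge_0 (c * a)). nra. }
  eapply Rle_trans;
    [| exact (weighted_inv_sqrt_sum_ge a b c _ _ _ ha hb hc hw1 hw2 hw3)].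
  apply sqrt6_ratio_le; [lra | nra | exact hQ |].
  exact (weighted_radicand_sum_le a b c ha hb hc).
Qed.
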